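(* Let $\mathbf n=(n_1,\dots,n_k)$ with $n_i\ge0$ integers and $\sum n_i=n$. For every $m\ge0$, as rational functions of $q^{-2}$ and indeterminates $\mu_1,\dots,\mu_k$, $$\vartheta_m(\mathbf n,q^{-2},\mu)=\sum_{j=1}^kC_j(\mathbf n,q^{-2},\mu)\mu_j^m,$$ where $$C_j(\mathbf n,q^{-2},\mu)=\hat n_j+\hat n_j\sum_{\ell=1}^{k-1}(1-q^{-2})^\ell\sum_{\substack{1\le i_1<\dots<i_\ell\le k\\ i_1,\dots,i_\ell\neq j}}\frac{\hat n_{i_1}\mu_{i_1}}{\mu_j-\mu_{i_1}}\cdots\frac{\hat n_{i_\ell}\mu_{i_\ell}}{\mu_j-\mu_{i_\ell}}.$$
   Context: $\hat m=\frac{1-q^{-2m}}{1-q^{-2}}$ for $m\in\mathbb Z$. For $m\ge1$, $\vartheta_m(\mathbf n,q^{-2},\mu)=\sum_{\ell=1}^k(1-q^{-2})^{\ell-1}\sum_{\mathbf d}\sum_{1\le i_1<\dots<i_\ell\le k}\hat n_{i_1}\cdots\hat n_{i_\ell}\mu_{i_1}^{d_1}\cdots\mu_{i_\ell}^{d_\ell}$, where $\mathbf d=(d_1,\dots,d_\ell)$ runs over $\ell$-tuples of positive integers with $d_1+\dots+d_\ell=m$; and $\vartheta_0(\mathbf n,q^{-2},\mu)=\hat n$. *)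

From mathcomp Require Import all_boot all_order all_algebra.
Set Implicit Arguments. Unset Strict Implicit. Unset Printing Implicit Defensive.
Import Order.TTheory GRing.Theory Num.Theory.
Local Open Scope ring_scope.

Section Defs.
Variable F : fieldType.

(* \hat m = (1 - t^m)/(1 - t), t playing the role of q^{-2}. *)
Definition qhat (t : F) (m : nat) : F := (1 - t ^+ m) / (1 - t).

Definition incr_idx (l k : nat) (i : {ffun 'I_l -> 'I_k}) : bool :=
  [forall a : 'I_l, forall b : 'I_l, (a < b)%N ==> (i a < i b)%N].

(* compositions d = (d_1,...,d_l) of m into l positive parts
   (each d_a <= m, so 'I_m.+1 is large enough) *)
Definition composition (l m : nat) (d : {ffun 'I_l -> 'I_m.+1}) : bool :=
  [forall a : 'I_l, (0 < d a)%N] && ((\sum_(a < l) (d a : nat))%N == m).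

Definition vartheta (k : nat) (n : 'I_k -> nat) (t : F) (mu : 'I_k -> F)
    (m : nat) : F :=
  if m is 0%N then qhat t (\sum_(i < k) n i)%N
  else \sum_(1 <= l < k.+1)
         (1 - t) ^+ l.-1 *
         \sum_(d : {ffun 'I_l -> 'I_m.+1} | composition d)
           \sum_(i : {ffun 'I_l -> 'I_k} | incr_idx i)
             \prod_(a < l) (qhat t (n (i a)) * mu (i a) ^+ (d a)).

Definition Ccoef (k : nat) (n : 'I_k -> nat) (t : F) (mu : 'I_k -> F)
    (j : 'I_k) : F :=
  qhat t (n j) + qhat t (n j) *
    \sum_(1 <= l < k)
      (1 - t) ^+ l *
      \sum_(i : {ffun 'I_l -> 'I_k} | incr_idx i && [forall a, i a != j])
        \prod_(a < l) (qhat t (n (i a)) * mu (i a) / (mu j - mu (i a))).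

End Defs.

(* Both sides are sums over nonempty sets S of indices, weighted by
   (1 - t)^(|S|-1) * prod_(u in S) nhat_u.  On the left this weight multiplies
   the sum over compositions of m into |S| parts of prod mu^d, which is the
   coefficient of X^m in prod_(u in S) (mu_u X + ... + (mu_u X)^m).  On the
   right, grouping the terms of the C_j by S = {j, i_1, ..., i_l}, it
   multiplies P_S(m) = sum_(j in S) mu_j^m prod_(i in S, i <> j) mu_i / (mu_j - mu_i).
   For y in S both quantities obey P_S(m+1) = mu_y (P_S(m) + P_(S-y)(m)), and
   they agree on singletons and at m = 1: there the Lagrange interpolation
   identity sum_j prod_(i <> j) (X - mu_i) / (mu_j - mu_i) = 1, evaluated at
   X = 0, gives P_S(0) = (-1)^(|S|-1).  With this value of P_S(0) the case
   m = 0 is the expansion 1 - t^n = 1 - prod_u (1 - (1 - t) nhat_u) over subsets. *)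

From mathcomp Require Import all_boot all_algebra.
From mathcomp.algebra_tactics Require Import ring.
Import GRing.Theory.
Local Open Scope ring_scope.
Set Implicit Arguments. Unset Strict Implicit. Unset Printing Implicit Defensive.

Section TruncatedGeometric.
Variable R : comNzRingType.

Definition geomp (v : R) (M : nat) : {poly R} :=
  \poly_(e < M.+1) (if (0 < e)%N then v ^+ e else 0).

Lemma geompE (v : R) (M : nat) :
  geomp v M = v *: ('X * (1 + geomp v M)) - v ^+ M.+1 *: 'X^(M.+1).
Proof.
apply/polyP => i; rewrite coefB !coefZ coefXM coefXn /geomp !coef_poly.
case: i => [|i] /=; first by rewrite !mulr0 subr0.
rewrite coefD coef1 coef_poly ltnS.
case: i => [|i] /=.
  by case: M => [|M] /=; rewrite ?addr0 ?mulr1 ?mulr0 ?subr0 ?expr1 ?subrr.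
rewrite add0r ltnS -[i.+2 == M.+1]/(i.+1 == M); case: (ltngtP i.+1 M) => h.
- by rewrite mulr0 subr0 exprS.
- by rewrite !mulr0 subr0.
- by rewrite mulr1 -exprS h subrr.
Qed.

Lemma coef0_geompM (v : R) (M : nat) (p : {poly R}) : (geomp v M * p)`_0 = 0.
Proof. by rewrite coef0M /geomp coef_poly mul0r. Qed.

Lemma coef_geompMS (v : R) (M i : nat) (p : {poly R}) : (i < M)%N ->
  (geomp v M * p)`_i.+1 = v * ((geomp v M * p)`_i + p`_i).
Proof.
move=> iM; rewrite [in LHS]geompE mulrBl coefB -!scalerAl !coefZ -mulrA coefXM.
by rewrite coefXnM ltnS iM mulr0 subr0 mulrDl mul1r coefD addrC.
Qed.

Lemma sum_composition_coef (l m : nat) (nu : 'I_l -> R) :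
  \sum_(d : {ffun 'I_l -> 'I_m.+1} | composition d) \prod_(a < l) nu a ^+ d a
  = (\prod_(a < l) geomp (nu a) m)`_m.
Proof.
under [in RHS]eq_bigr => a _ do rewrite /geomp poly_def.
rewrite bigA_distr_bigA /= coef_sum big_mkcond /=; apply: eq_bigr => d _.
rewrite scaler_prod prodrXr coefZ coefXn /composition.
have [/forallP pos | /forallPn [a a0]] /= := boolP [forall a, 0 < d a]%N.
  under [in RHS]eq_bigr => a _ do rewrite pos.
  by rewrite eq_sym; case: eqP; rewrite ?mulr1 ?mulr0.
by rewrite (bigD1 a) //= (negbTE a0) !mul0r.
Qed.

End TruncatedGeometric.

Section Interpolation.
Variables (F : fieldType) (I : finType) (mu : I -> F).
Hypothesis mu_inj : injective mu.

Definition mu_ratio (j i : I) : F := mu i / (mu j - mu i).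

Definition interp_sum (S : {set I}) (m : nat) : F :=
  \sum_(j in S) mu j ^+ m * \prod_(i in S :\ j) mu_ratio j i.

Lemma subr_mu_neq0 (i j : I) : i != j -> mu j - mu i != 0.
Proof. by move=> ij; rewrite subr_eq0 (inj_eq mu_inj) eq_sym. Qed.

Lemma sum_lagrange_basis (S : {set I}) : S != set0 ->
  \sum_(j in S) \prod_(i in S :\ j) ((mu j - mu i)^-1 *: ('X - (mu i)%:P)) = 1.
Proof.
move=> S0; apply/eqP; rewrite -subr_eq0; apply/eqP.
set q := _ - 1; apply: (@roots_geq_poly_eq0 _ q [seq mu b | b <- enum S]).
- apply/allP => x /mapP[b]; rewrite mem_enum => bS ->.
  rewrite /root /q hornerD hornerN hornerC horner_sum (bigD1 b) //= horner_prod.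
  rewrite big1 => [|i]; last first.
    by rewrite in_setD1 => /andP[ib _]; rewrite hornerZ hornerXsubC mulVf // subr_mu_neq0.
  rewrite big1 ?addr0 ?subrr // => j /andP[jS jb].
  rewrite horner_prod (bigD1 b) /=; last by rewrite in_setD1 eq_sym jb.
  by rewrite hornerZ hornerXsubC subrr mulr0 mul0r.
- by rewrite map_inj_uniq // enum_uniq.
rewrite size_map -cardE /q; apply: leq_trans (size_polyD _ _) _.
rewrite geq_max size_polyN size_poly1 card_gt0 S0 andbT.
apply: leq_trans (size_sum _ _ _) _; apply/bigmax_leqP => j jS.
rewrite scaler_prod; apply: leq_trans (size_scale_leq _ _) _.
by rewrite -big_enum size_prod_XsubC -cardE (cardsD1 j S) jS.
Qed.

Lemma interp_sum0 (S : {set I}) : S != set0 -> interp_sum S 0 = (-1) ^+ #|S|.-1.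
Proof.
move=> S0; have /(congr1 (horner^~ 0)) := sum_lagrange_basis S0.
rewrite hornerC horner_sum => sum1.
rewrite -[RHS]mulr1 -[X in _ * X]sum1 mulr_sumr; apply: eq_bigr => j jS.
rewrite expr0 mul1r horner_prod.
under [in RHS]eq_bigr => i _ do rewrite hornerZ hornerXsubC sub0r mulrN -mulN1r.
rewrite [in RHS]big_split /= prodr_const (cardsD1 j S) jS /= signrMK.
by apply: eq_bigr => i _; rewrite /mu_ratio mulrC.
Qed.

Lemma interp_sumS (y : I) (T : {set I}) (m : nat) : y \notin T ->
  interp_sum (y |: T) m.+1 = mu y * (interp_sum (y |: T) m + interp_sum T m).
Proof.
move=> yT; rewrite /interp_sum !big_setU1 //= !setU1K //.
have ratio_y e : \sum_(j in T) mu j ^+ e * \prod_(i in (y |: T) :\ j) mu_ratio j i =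
    \sum_(j in T) mu j ^+ e * (mu_ratio j y * \prod_(i in T :\ j) mu_ratio j i).
  apply: eq_bigr => j jT; have jy : j != y by apply: contraNneq yT => <-.
  rewrite setDUl (setDidPl _) ?disjoints1 ?in_set1 1?eq_sym //.
  by rewrite big_setU1 // in_setD1 (negbTE yT) andbF.
rewrite !ratio_y -addrA -big_split /= mulrDr mulr_sumr exprS mulrA; congr (_ + _).
apply: eq_bigr => j jT.
have yj : mu j - mu y != 0 by apply: subr_mu_neq0; apply: contraNneq yT => ->.
by rewrite /mu_ratio exprS; field.
Qed.

Lemma coef0_prod_geomp (S : {set I}) (M : nat) :
  S != set0 -> (\prod_(u in S) geomp (mu u) M)`_0 = 0.
Proof. by case/set0Pn => y yS; rewrite (bigD1 y) //= coef0_geompM. Qed.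

Lemma coef_prod_geomp (S : {set I}) (M i : nat) : S != set0 -> (0 < i <= M)%N ->
  (\prod_(u in S) geomp (mu u) M)`_i = interp_sum S i.
Proof.
rewrite -card_gt0 => S0.
have [N cS] : exists N, #|S| = N.+1 by exists #|S|.-1; rewrite prednK.
elim: N S {S0} cS i => [|N IH] S cS i iM.
  move/eqP/cards1P: cS => [y ->]; case/andP: iM => i0 iM.
  by rewrite big_set1 /interp_sum big_set1 setDv big_set0 mulr1 /geomp coef_poly ltnS iM i0.
have [y yS] : {y | y \in S} by apply/sigW/set0Pn; rewrite -card_gt0 cS.
set T := S :\ y; have yT : y \notin T by rewrite in_setD1 eqxx.
have cT : #|T| = N.+1 by move: cS; rewrite (cardsD1 y S) yS => -[].
have T0 : T != set0 by rewrite -card_gt0 cT.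
have -> : S = y |: T by rewrite setD1K.
case: i iM => // i /= iM.
elim: i iM => [|i IHi] iM; rewrite interp_sumS // big_setU1 //= coef_geompMS //.
  have yT0 : y |: T != set0 by rewrite -card_gt0 cardsU1 yT.
  rewrite coef0_geompM coef0_prod_geomp // !interp_sum0 //.
  by rewrite cardsU1 yT cT exprS mulN1r addr0 addNr.
by rewrite -big_setU1 //= IHi ?(IH T cT) //=; apply: ltnW.
Qed.

End Interpolation.

Lemma ltn_ord_trans (n : nat) : transitive (relpre (@nat_of_ord n) ltn).
Proof. by move=> ? ? ?; apply: ltn_trans. Qed.

Lemma sorted_enum_ltn (n : nat) (A : {pred 'I_n}) : sorted (relpre val ltn) (enum A).
Proof.
rewrite /enum_mem -enumT; apply: sorted_filter; first exact: ltn_ord_trans.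
by rewrite -sorted_map val_enum_ord iota_ltn_sorted.
Qed.

Section IncreasingTuples.
Variables (k l : nat).
Implicit Types (i : {ffun 'I_l -> 'I_k}) (S : {set 'I_k}).

Definition tuple_set i : {set 'I_k} := [set i a | a : 'I_l].

Lemma incr_idx_inj i : incr_idx i -> injective i.
Proof.
move=> /forallP incr a b eq_ab; case: (ltngtP a b) => [lt_ab | lt_ba | /val_inj //].
  by have := implyP (forallP (incr a) b) lt_ab; rewrite eq_ab ltnn.
by have := implyP (forallP (incr b) a) lt_ba; rewrite eq_ab ltnn.
Qed.

Lemma card_tuple_set i : incr_idx i -> #|tuple_set i| = l.
Proof. by move=> /incr_idx_inj inj_i; rewrite card_imset // card_ord. Qed.

Lemma enum_tuple_set i : incr_idx i -> enum (tuple_set i) = map i (enum 'I_l).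
Proof.
move=> incr; apply: (irr_sorted_eq (@ltn_ord_trans k) (fun a => ltnn a)).
- exact: sorted_enum_ltn.
- apply: (homo_sorted (e := relpre val ltn)) (sorted_enum_ltn _) => a b.
  by move/forallP: incr => /(_ a) /forallP /(_ b) /implyP.
- move=> x; rewrite mem_enum; apply/imsetP/mapP => -[a _ ->]; exists a => //.
  by rewrite mem_enum.
Qed.

Lemma notin_tuple_set i (x : 'I_k) : (x \notin tuple_set i) = [forall a, i a != x].
Proof.
apply/negP/forallP => [x_notin a | i_neq /imsetP[a _ xE]].
  by apply/eqP => iaE; apply: x_notin; apply/imsetP; exists a.
by have := i_neq a; rewrite xE eqxx.
Qed.

Variable x0 : 'I_k.

Definition set_tuple S : {ffun 'I_l -> 'I_k} := [ffun a : 'I_l => nth x0 (enum S) a].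

Lemma tuple_setK i : incr_idx i -> set_tuple (tuple_set i) = i.
Proof.
move=> incr; apply/ffunP => a; rewrite ffunE enum_tuple_set //.
by rewrite (nth_map a) ?size_enum_ord // nth_ord_enum.
Qed.

Lemma incr_set_tuple S : #|S| = l -> incr_idx (set_tuple S).
Proof.
move=> cS; apply/forallP => a; apply/forallP => b; apply/implyP => ab; rewrite !ffunE.
by apply: (sorted_ltn_nth (@ltn_ord_trans k) x0 (sorted_enum_ltn S)); rewrite // inE -cardE cS.
Qed.

Lemma set_tupleK S : #|S| = l -> tuple_set (set_tuple S) = S.
Proof.
move=> cS; apply/setP => x; apply/imsetP/idP => [[a _ ->] | xS].
  by rewrite ffunE -mem_enum mem_nth // -cardE cS.
have il : (index x (enum S) < l)%N by rewrite -cS cardE index_mem mem_enum.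
by exists (Ordinal il) => //; rewrite ffunE nth_index ?mem_enum.
Qed.

Lemma big_incr_idx (R : nmodType) (P : pred {set 'I_k}) (G : {set 'I_k} -> R) :
  \sum_(i | incr_idx i && P (tuple_set i)) G (tuple_set i)
  = \sum_(S : {set 'I_k} | (#|S| == l) && P S) G S.
Proof.
rewrite [RHS](reindex_onto tuple_set set_tuple) => [|S /andP[/eqP cS _]]; last exact: set_tupleK.
apply: eq_bigl => i; have [incr | not_incr] := boolP (incr_idx i).
  by rewrite card_tuple_set // tuple_setK // !eqxx andbT.
apply/esym/negbTE; apply: contra not_incr => /andP[/andP[/eqP cS _] /eqP <-].
exact: incr_set_tuple.
Qed.

End IncreasingTuples.

Section SubsetSums.
Variable T : finType.

Lemma sum_nonempty_by_card (R : nmodType) (K : nat) (Q : pred {set T}) (g : {set T} -> R) :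
  (forall S, Q S -> #|S| < K)%N ->
  \sum_(1 <= l < K) \sum_(S : {set T} | (#|S| == l) && Q S) g S
  = \sum_(S : {set T} | (S != set0) && Q S) g S.
Proof.
move=> small_Q; under eq_bigr => l _ do rewrite big_mkcond.
rewrite exchange_big [RHS]big_mkcond; apply: eq_bigr => S _ /=.
have [QS | _] := boolP (Q S); last by rewrite andbF big1 // => l _; rewrite andbF.
rewrite andbT -card_gt0; have [S0 | S_gt0] := posnP #|S|.
  by rewrite big1_seq // => l /andP[_]; rewrite mem_index_iota S0; case: l.
rewrite (big_rem #|S|) /=; last by rewrite mem_index_iota S_gt0 small_Q.
rewrite eqxx big1_seq ?addr0 // => l /andP[_]; rewrite mem_rem_uniq ?iota_uniq //.
by rewrite inE eq_sym => /andP[/negbTE ->].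
Qed.

Lemma sum_pointed_subsets (R : comNzRingType) (c : R) (a : T -> R) (b : T -> T -> R) :
  \sum_(S : {set T} | S != set0) c ^+ #|S|.-1 * \sum_(j in S) a j * \prod_(u in S :\ j) b j u
  = \sum_j a j * \sum_(U : {set T} | j \notin U) c ^+ #|U| * \prod_(u in U) b j u.
Proof.
transitivity (\sum_(S : {set T}) \sum_(j in S) c ^+ #|S|.-1 * (a j * \prod_(u in S :\ j) b j u)).
  rewrite [RHS](bigD1 set0) //= big_set0 add0r; apply: eq_bigr => S _; exact: mulr_sumr.
rewrite (exchange_big_dep predT) //=; apply: eq_bigr => j _.
rewrite mulr_sumr (reindex_onto (fun U => j |: U) (fun S => S :\ j)) /=; last first.
  by move=> S jS; rewrite setD1K.
apply: eq_big => [U | U /andP[_ /eqP jUK]].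
  rewrite setU11 /=; have [jU | jU] := boolP (j \in U).
    by apply/negbTE/eqP => eqU; move: jU; rewrite -eqU in_setD1 eqxx.
  by rewrite setU1K // eqxx.
have jU : j \notin U by rewrite -jUK in_setD1 eqxx.
by rewrite jUK cardsU1 jU /= mulrCA.
Qed.

Lemma sum_prod_subsets (R : comNzRingType) (y : T -> R) :
  \sum_(S : {set T}) \prod_(u in S) y u = \prod_u (1 + y u).
Proof.
rewrite [RHS](eq_bigr (fun u => \sum_(b : bool) if b then y u else 1)) => [|u _]; last first.
  by rewrite big_bool addrC.
rewrite bigA_distr_bigA /= (reindex (fun f : {ffun T -> bool} => [set u | f u])) /=.
  by apply: eq_bigr => f _; rewrite big_mkcond; apply: eq_bigr => u _; rewrite inE.
exists (fun S : {set T} => [ffun u => u \in S]) => [f _ | S _].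
  by apply/ffunP => u; rewrite ffunE inE.
by apply/setP => u; rewrite inE ffunE.
Qed.

End SubsetSums.

Section Proposition.
Variables (F : fieldType) (k : nat) (n : 'I_k -> nat) (t : F) (mu : 'I_k -> F).
Hypotheses (t_neq1 : t != 1) (mu_inj : injective mu).
Local Notation nh u := (qhat t (n u)).

Definition theta_subsets (m : nat) : F :=
  \sum_(S : {set 'I_k} | S != set0)
    (1 - t) ^+ #|S|.-1 * ((\prod_(u in S) nh u) * interp_sum mu S m).

Lemma sum_compositions_incr_idx (l m : nat) (i : {ffun 'I_l -> 'I_k}) :
  (0 < l)%N -> incr_idx i ->
  \sum_(d : {ffun 'I_l -> 'I_m.+2} | composition d) \prod_(a < l) (nh (i a) * mu (i a) ^+ d a)
  = (\prod_(u in tuple_set i) nh u) * interp_sum mu (tuple_set i) m.+1.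
Proof.
move=> l_gt0 incr; have i_inj := incr_idx_inj incr.
have S0 : tuple_set i != set0 by rewrite -card_gt0 card_tuple_set.
rewrite (eq_bigr (fun d : {ffun 'I_l -> 'I_m.+2} =>
    (\prod_(a < l) nh (i a)) * \prod_(a < l) mu (i a) ^+ d a)) => [|d _]; last exact: big_split.
rewrite -mulr_sumr (sum_composition_coef m.+1 (mu \o i)).
rewrite -(coef_prod_geomp mu_inj (M := m.+1) S0) ?leqnn //.
by rewrite /tuple_set !big_imset //= => a b _ _; apply: i_inj.
Qed.

Lemma vartheta_subsets (m : nat) : vartheta n t mu m.+1 = theta_subsets m.+1.
Proof.
rewrite /theta_subsets -(eq_bigl _ _ (fun S => andbT (S != set0))).
rewrite -(sum_nonempty_by_card (K := k.+1)) => [|S _]; last first.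
  by rewrite ltnS -[k in (_ <= k)%N]card_ord max_card.
apply: eq_big_nat => l /andP[l_gt0 l_le_k].
have x0 : 'I_k := Ordinal (leq_trans l_gt0 l_le_k).
rewrite exchange_big /= (eq_bigr _ (fun i => sum_compositions_incr_idx m l_gt0)).
rewrite -(eq_bigl _ _ (fun i => andbT (incr_idx i))).
rewrite (big_incr_idx l x0 predT (fun S => (\prod_(u in S) nh u) * interp_sum mu S m.+1)).
by rewrite mulr_sumr; apply: eq_bigr => S /andP[/eqP <- _].
Qed.

Lemma Ccoef_subsets (j : 'I_k) :
  Ccoef n t mu j = nh j * \sum_(U : {set 'I_k} | j \notin U)
    (1 - t) ^+ #|U| * \prod_(u in U) (nh u * mu_ratio mu j u).
Proof.
have sum_l l : (1 - t) ^+ l * \sum_(i | incr_idx i && [forall a, i a != j])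
      \prod_(a < l) (nh (i a) * mu (i a) / (mu j - mu (i a)))
    = \sum_(U : {set 'I_k} | (#|U| == l) && (j \notin U))
      (1 - t) ^+ #|U| * \prod_(u in U) (nh u * mu_ratio mu j u).
  under eq_bigl => i do rewrite -notin_tuple_set.
  rewrite (eq_bigr (fun i => \prod_(u in tuple_set i) (nh u * mu_ratio mu j u)))
    => [|i /andP[incr _]].
    rewrite (big_incr_idx l j (fun U => j \notin U)
      (fun U => \prod_(u in U) (nh u * mu_ratio mu j u))).
    by rewrite mulr_sumr; apply: eq_bigr => U /andP[/eqP -> _].
  rewrite /tuple_set big_imset => [|a b _ _ /(incr_idx_inj incr)//].
  by apply: eq_bigr => a _; rewrite /mu_ratio mulrA.
rewrite /Ccoef (eq_big_nat _ _ (fun l _ => sum_l l)) sum_nonempty_by_card => [|U jU]; last first.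
  apply: (@leq_ltn_trans #|[set~ j]|).
    by apply/subset_leq_card/subsetP => u uU; rewrite !inE; apply: contraNneq jU => <-.
  by rewrite cardsC1 card_ord prednK //; apply: leq_ltn_trans (ltn_ord j).
rewrite [in RHS](bigD1 set0) ?in_set0 //= cards0 big_set0 mulr1 mulrDr mulr1.
by congr (_ + _ * _); apply: eq_bigl => U; rewrite andbC.
Qed.

Lemma sum_Ccoef_subsets (m : nat) :
  \sum_(j < k) Ccoef n t mu j * mu j ^+ m = theta_subsets m.
Proof.
rewrite /theta_subsets (eq_bigr (fun S : {set 'I_k} => (1 - t) ^+ #|S|.-1 *
    \sum_(j in S) (nh j * mu j ^+ m) * \prod_(u in S :\ j) (nh u * mu_ratio mu j u))) => [|S _].
  by rewrite sum_pointed_subsets; apply: eq_bigr => j _; rewrite Ccoef_subsets mulrAC.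
rewrite /interp_sum mulr_sumr; congr (_ * _); apply: eq_bigr => j jS.
by rewrite (big_setD1 j jS) /= [in RHS]big_split /= mulrACA.
Qed.

Lemma vartheta0_subsets : vartheta n t mu 0 = theta_subsets 0.
Proof.
have t1 : 1 - t != 0 by rewrite subr_eq0 eq_sym.
have prod_t : \prod_u t ^+ n u = \sum_(S : {set 'I_k}) \prod_(u in S) - ((1 - t) * nh u).
  rewrite sum_prod_subsets; apply: eq_bigr => u _.
  by rewrite /qhat mulrC divfK // opprB addrC subrK.
apply: (mulfI t1); rewrite /= {1}/qhat mulrC divfK // -prodrXr prod_t.
rewrite (bigD1 set0) //= big_set0 opprD addrA subrr add0r -sumrN mulr_sumr.
apply: eq_bigr => S S0; rewrite interp_sum0 //.
under eq_bigr => u _ do rewrite -mulNr.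
rewrite big_split prodr_const /=.
have -> : #|S| = #|S|.-1.+1 by rewrite prednK // card_gt0.
by rewrite /= exprS [in LHS]exprNn; ring.
Qed.

End Proposition.

Theorem proposition4p3 (F : fieldType) (k : nat) (n : 'I_k -> nat)
    (t : F) (mu : 'I_k -> F) :
  t != 1 -> injective mu ->
  forall m : nat,
    vartheta n t mu m = \sum_(j < k) Ccoef n t mu j * mu j ^+ m.
Proof.
move=> t_neq1 mu_inj m; rewrite sum_Ccoef_subsets.
by case: m => [|m]; [apply: vartheta0_subsets | apply: vartheta_subsets].
Qed.
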